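(* Let $k,\ell>0$, $\pi_1\in\mathcal{T}_k$, $\pi_2\in\mathcal{T}_\ell$, let $t=\operatorname{slmax}(\pi_2)$, let $a_1,\dots,a_t$ be the values of the left-to-right maxima of $\mathcal{S}(\pi_2)$ in order, and let $1\le i\le t$. Let $$\pi=C_2(\pi_1,\pi_2,i)=\pi_1^{+(0,k,a_i)}\cdot(k+\ell+1)\cdot\pi_2^{+(k-1,a_i+1,k)}.$$ Then $\pi\in\mathcal{T}_{k+\ell+1}$, and $\operatorname{slmax}(\pi)=\operatorname{slmax}(\pi_1)+\operatorname{slmax}(\pi_2)-i+1$.
   Context: For a finite sequence $A$ of distinct integers, the stack-sorting operator $\mathcal{S}$ is defined by $\mathcal{S}(\epsilon)=\epsilon$ for the empty sequence and, if $A$ is non-empty with largest element $m$, writing $A=A_L\cdot(m)\cdot A_R$ (concatenation), $\mathcal{S}(A)=\mathcal{S}(A_L)\cdot\mathcal{S}(A_R)\cdot(m)$. For $n\ge1$, $\mathcal{T}_n$ is the set of permutations $\sigma\in\mathfrak{S}_n$ (viewed as sequences) with $\mathcal{S}(\mathcal{S}(\sigma))$ equal to the identity. For a sequence $\tau$ of integers and $k_1<k_2$, $\tau^{+(k_1,m,k_2)}$ is obtained by adding $k_1$ to each element strictly smaller than $m$ and $k_2$ to every other element. For a permutation $\sigma$, $\operatorname{slmax}(\sigma)$ is the number of left-to-right maxima of $\mathcal{S}(\sigma)$ (indices $i$ such that $\mathcal{S}(\sigma)(i)>\mathcal{S}(\sigma)(j)$ for all $j<i$). *)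

From mathcomp Require Import all_boot.
Set Implicit Arguments. Unset Strict Implicit. Unset Printing Implicit Defensive.

(* Sequences of distinct integers are represented as seq nat (all values
   occurring in the statement are positive). *)

(* Stack-sorting operator S, by recursion with fuel = size of the input.
   For a non-empty A with maximum m, A = A_L ++ [m] ++ A_R where
   A_L = take (index m A) A and A_R = drop (index m A).+1 A. *)
Fixpoint ssort_fuel (fuel : nat) (A : seq nat) : seq nat :=
  match fuel with
  | 0 => [::]
  | f.+1 =>
    match A with
    | [::] => [::]
    | _ :: _ =>
      let m := \max_(x <- A) x in
      let j := index m A in
      ssort_fuel f (take j A) ++ ssort_fuel f (drop j.+1 A) ++ [:: m]
    end
  end.

Definition stack_sort (A : seq nat) : seq nat := ssort_fuel (size A) A.

Definition is_perm (n : nat) (s : seq nat) : bool := perm_eq s (iota 1 n).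

Definition inT (n : nat) (s : seq nat) : bool :=
  is_perm n s && (stack_sort (stack_sort s) == iota 1 n).

Definition shift (k1 m k2 : nat) (tau : seq nat) : seq nat :=
  [seq (if x < m then x + k1 else x + k2) | x <- tau].

Definition lrmax_vals (s : seq nat) : seq nat :=
  [seq nth 0 s i | i <- iota 0 (size s)
     & all (fun j => nth 0 s j < nth 0 s i) (iota 0 i)].

Definition slmax (s : seq nat) : nat := size (lrmax_vals (stack_sort s)).

(* C_2(pi1, pi2, i), with a_i the i-th (1-based) left-to-right maximum
   value of S(pi2) *)
Definition C2 (k l : nat) (pi1 pi2 : seq nat) (i : nat) : seq nat :=
  let a := nth 0 (lrmax_vals (stack_sort pi2)) i.-1 in
  shift 0 k a pi1 ++ [:: k + l + 1] ++ shift (k - 1) (a + 1) k pi2.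

From mathcomp Require Import all_boot zify.
Set Implicit Arguments. Unset Strict Implicit. Unset Printing Implicit Defensive.

(* Stack sorting splits at the maximum, S(L m R) = S(L) S(R) m, and commutes
   with increasing relabellings; by Knuth's criterion S(w) is increasing iff
   w avoids 231, so sigma is in T_n iff S(sigma) avoids 231.  Writing
   S(pi1) = u k, the permutation pi = C_2(pi1, pi2, i) has
   S(pi) = u (k + a_i) g(S(pi2)) (k + l + 1), where g is the increasing
   relabelling of pi2.  The new value k + a_i lies just above g(a_i), and a_i
   is a left-to-right maximum of S(pi2), so a 231 starting at k + a_i would
   give one starting at a_i in S(pi2); the remaining blocks are increasing
   relative to each other.  The left-to-right maxima of S(pi) are those of u,
   then k + a_i, then the images of the t - i maxima of S(pi2) after a_i,
   then k + l + 1. *)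

Lemma bigmax_seq_mem (s : seq nat) : s != [::] -> \max_(x <- s) x \in s.
Proof.
elim: s => // x [|y s] IH _; first by rewrite big_seq1 mem_head.
rewrite big_cons in_cons; move: (IH isT); set M := \max_(_ <- _) _.
by rewrite /maxn; case: ltnP => _ M_in; rewrite ?eqxx ?M_in ?orbT.
Qed.

Lemma ssort_fuel_enough f1 f2 s : size s <= f1 -> size s <= f2 ->
  ssort_fuel f1 s = ssort_fuel f2 s.
Proof.
elim: f1 f2 s => [|f1 IH] [|f2] [|x s] //= le1 le2.
have : index (\max_(y <- x :: s) y) (x :: s) < size (x :: s).
  by rewrite index_mem bigmax_seq_mem.
by move=> /= lt_idx; congr (_ ++ _ ++ _); apply: IH;
  rewrite ?size_take_min ?size_drop /=; lia.
Qed.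

Lemma ssort_fuelS f s : s != [::] ->
  let j := index (\max_(x <- s) x) s in
  ssort_fuel f.+1 s =
    ssort_fuel f (take j s) ++ ssort_fuel f (drop j.+1 s) ++
    [:: \max_(x <- s) x].
Proof. by case: s. Qed.

Lemma stack_sort_cat_max L m R : all (ltn^~ m) L -> all (ltn^~ m) R ->
  stack_sort (L ++ m :: R) = stack_sort L ++ stack_sort R ++ [:: m].
Proof.
move=> ltL ltR; have max_m : \max_(x <- L ++ m :: R) x = m.
  apply/eqP; rewrite eqn_leq; apply/andP; split.
    apply/bigmax_leqP_seq => x; rewrite mem_cat in_cons => + _.
    by case/or3P => [/(allP ltL)/ltnW | /eqP-> | /(allP ltR)/ltnW].
  by apply: leq_bigmax_seq; rewrite // mem_cat mem_head orbT.
have m_notin_L : m \notin L by apply/negP => /(allP ltL); rewrite /= ltnn.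
rewrite /stack_sort size_cat /= addnS ssort_fuelS /=; last by case: (L).
rewrite max_m index_cat (negbTE m_notin_L) /= eqxx addn0 take_size_cat //.
have -> : drop (size L).+1 (L ++ m :: R) = R.
  by rewrite -cat_rcons drop_size_cat // size_rcons.
by rewrite (@ssort_fuel_enough _ (size L) L) ?leq_addr
  // (@ssort_fuel_enough _ (size R) R) ?leq_addl.
Qed.

Lemma uniq_split_max (w : seq nat) (m : nat) :
  uniq w -> m \in w -> all (leq^~ m) w ->
  exists L R, [/\ w = L ++ m :: R, all (ltn^~ m) L & all (ltn^~ m) R].
Proof.
move=> uniq_w m_in; case/splitPr: m_in uniq_w => L R.
rewrite cat_uniq /= all_cat /= => /and3P [_ /norP [mL _] /andP [mR _]].
case/and3P=> leL _ leR.
exists L, R; split=> //; apply/allP=> x x_in /=; rewrite ltn_neqAle.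
  by rewrite (allP leL x x_in) andbT; apply: contraNneq _ mL => <-.
by rewrite (allP leR x x_in) andbT; apply: contraNneq _ mR => <-.
Qed.

Lemma uniq_max_ind (P : seq nat -> Prop) : P [::] ->
  (forall (L : seq nat) (m : nat) (R : seq nat), uniq (L ++ m :: R) ->
     all (ltn^~ m) L -> all (ltn^~ m) R -> P L -> P R -> P (L ++ m :: R)) ->
  forall w : seq nat, uniq w -> P w.
Proof.
move=> P0 Pmax w; have [n] := ubnP (size w).
elim: n => // n IH in w *; case: w => [|x s] // lt_n uniq_w.
set m := \max_(y <- x :: s) y.
have m_in : m \in x :: s by apply: bigmax_seq_mem.
have [|L [R [w_eq ltL ltR]]] := uniq_split_max uniq_w m_in.
  by apply/allP=> y y_in; apply: leq_bigmax_seq.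
move: lt_n uniq_w; rewrite w_eq size_cat /= => lt_n uniq_w.
move: (uniq_w); rewrite cat_uniq /= => /and4P [uL _ _ uR].
by apply: Pmax => //; apply: IH => //; lia.
Qed.

Lemma perm_stack_sort (w : seq nat) : uniq w -> perm_eq (stack_sort w) w.
Proof.
move: w; apply: uniq_max_ind => // L m R _ ltL ltR permL permR.
rewrite stack_sort_cat_max //.
apply: perm_trans (perm_cat permL (perm_cat permR (perm_refl [:: m]))) _.
by rewrite perm_cat2l cats1 perm_rcons.
Qed.

Lemma stack_sort_rcons_max (w : seq nat) m : uniq w -> m \in w ->
  all (leq^~ m) w -> exists2 u, stack_sort w = rcons u m & all (ltn^~ m) u.
Proof.
move=> uniq_w m_in le_m.
have [L [R [w_eq ltL ltR]]] := uniq_split_max uniq_w m_in le_m.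
move: uniq_w; rewrite w_eq cat_uniq /= => /and4P [uL _ _ uR].
exists (stack_sort L ++ stack_sort R).
  by rewrite stack_sort_cat_max // -cats1 catA.
by rewrite all_cat !(perm_all _ (perm_stack_sort _)) ?ltL.
Qed.

Lemma stack_sort_uniq (w : seq nat) : uniq w -> uniq (stack_sort w).
Proof. by move=> uniq_w; rewrite (perm_uniq (perm_stack_sort uniq_w)). Qed.

Lemma mem_stack_sort (w : seq nat) : uniq w -> stack_sort w =i w.
Proof. by move=> uniq_w; apply/perm_mem/perm_stack_sort. Qed.

Lemma stack_sort_map f (w : seq nat) : {homo f : x y / x < y} -> uniq w ->
  stack_sort (map f w) = map f (stack_sort w).
Proof.
move=> /leq_mono/leqW_mono f_mono; move: w.
apply: uniq_max_ind => // L m R _ ltL ltR eqL eqR.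
have lt_fm (s : seq nat) : all (ltn^~ m) s -> all (ltn^~ (f m)) (map f s).
  by rewrite all_map; apply: sub_all => x /=; rewrite f_mono.
by rewrite map_cat /= !stack_sort_cat_max ?lt_fm // eqL eqR !map_cat.
Qed.

Fixpoint starts231 (x : nat) (s : seq nat) : bool :=
  if s is y :: s' then (x < y) && has (ltn^~ x) s' || starts231 x s' else false.

Fixpoint avoids231 (s : seq nat) : bool :=
  if s is x :: s' then ~~ starts231 x s' && avoids231 s' else true.

Lemma starts231_cat x s t : starts231 x (s ++ t) =
  [|| starts231 x s, has (ltn x) s && has (ltn^~ x) t | starts231 x t].
Proof.
elim: s => //= y s ->; rewrite has_cat.
by case: (x < y); case: (starts231 x s); case: (has (ltn x) s);
  case: (has _ s); case: (has _ t).
Qed.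

Lemma starts231_has x s : starts231 x s -> has (ltn x) s && has (ltn^~ x) s.
Proof.
elim: s => //= y s IH /orP [/andP [-> below] | /IH /andP [-> ->]].
  by rewrite below !orbT.
by rewrite !orbT.
Qed.

Lemma starts231_cat_below x s t : all (leq^~ x) s ->
  starts231 x (s ++ t) = starts231 x t.
Proof.
move=> le_s; have no_above : has (ltn x) s = false.
  by apply/hasPn=> y /(allP le_s); rewrite /= -leqNgt.
have not231 : starts231 x s = false.
  by apply: contraFF no_above => /starts231_has /andP [].
by rewrite starts231_cat no_above not231.
Qed.

Lemma starts231_map f c x s :
  {in s, forall y, (c < f y) = (x < y)} ->
  {in s, forall y, (f y < c) = (y < x)} ->
  starts231 c (map f s) = starts231 x s.
Proof.
elim: s => //= y s IH above below.
have sub_s z : z \in s -> z \in y :: s by rewrite in_cons orbC => ->.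
rewrite above ?mem_head // has_map IH => [|z /sub_s|z /sub_s].
- by congr (_ && _ || _); apply: eq_in_has => z /sub_s /below.
- exact: above.
exact: below.
Qed.

Lemma avoids231_cat s t : avoids231 (s ++ t) -> avoids231 s && avoids231 t.
Proof.
elim: s => //= x s IH /andP [not231 /IH /andP [-> ->]]; rewrite !andbT.
by move: not231; rewrite starts231_cat negb_or => /andP [].
Qed.

Lemma avoids231_cross s t x : avoids231 (s ++ t) -> x \in s -> ~~ starts231 x t.
Proof.
elim: s => //= y s IH /andP [not231 av] /predU1P [-> | /IH]; last exact.
by move: not231; rewrite starts231_cat !negb_or => /and3P [].
Qed.

Lemma avoids231_cat_lt s t : avoids231 s -> avoids231 t -> allrel ltn s t ->
  avoids231 (s ++ t).
Proof.
elim: s => //= x s IH /andP [not231 av_s] av_t; rewrite allrel_consl.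
case/andP=> lt_x lt_s; rewrite IH // andbT starts231_cat !negb_or not231 /=.
have no_below : has (ltn^~ x) t = false.
  by apply/hasPn=> y /(allP lt_x) /= /ltnW; rewrite leqNgt.
rewrite no_below andbF /=; apply: contraFN no_below.
by move=> /starts231_has /andP [].
Qed.

Lemma avoids231_map f s : {homo f : x y / x < y} ->
  avoids231 (map f s) = avoids231 s.
Proof.
move=> /leq_mono/leqW_mono f_mono; elim: s => //= x s ->.
by rewrite (@starts231_map f (f x) x) // => y _; rewrite f_mono.
Qed.

Lemma avoids231_cat_max (L : seq nat) (m : nat) (R : seq nat) :
  uniq (L ++ m :: R) -> all (ltn^~ m) L -> all (ltn^~ m) R ->
  avoids231 (L ++ m :: R) = [&& avoids231 L, avoids231 R & allrel ltn L R].
Proof.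
rewrite cat_uniq => /and3P [_ /norP [_ disjLR] _] ltL ltR; apply/idP/idP.
  move=> av; have /andP [-> /= /andP [_ ->]] := avoids231_cat av.
  apply/allrelP=> x y x_in y_in; have /= lt_xm := allP ltL x x_in.
  have := avoids231_cross av x_in; rewrite /= lt_xm negb_or.
  case/andP=> /hasPn /(_ y y_in) /= y_ge _.
  rewrite ltn_neqAle leqNgt y_ge andbT; apply: contraNneq _ disjLR => eq_xy.
  by apply/hasP; exists y; rewrite // -eq_xy.
case/and3P=> avL avR ltLR; apply: avoids231_cat_lt => //=.
  rewrite avR andbT; apply/negP=> /starts231_has /andP [/hasP [y /(allP ltR)]].
  by rewrite /= ltnNge => /negP + /ltnW.
by rewrite allrel_consr ltL.
Qed.

Lemma sorted_stack_sort (w : seq nat) : uniq w ->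
  sorted ltn (stack_sort w) = avoids231 w.
Proof.
move: w; apply: uniq_max_ind => // L m R uniq_w ltL ltR IHL IHR.
move: (uniq_w); rewrite cat_uniq /= => /and4P [uL _ _ uR].
have ltS s : uniq s -> all (ltn^~ m) s -> all (ltn^~ m) (stack_sort s).
  by move=> uniq_s; rewrite (perm_all _ (perm_stack_sort uniq_s)).
rewrite stack_sort_cat_max // avoids231_cat_max // -IHL -IHR.
rewrite !(sorted_pairwise ltn_trans) !pairwise_cat allrel_catr !allrel1r.
rewrite !ltS // (eq_allrel_mem2 _ (mem_stack_sort uL) (mem_stack_sort uR)) /=.
by rewrite !andbT andbC -andbA.
Qed.

Lemma is_perm_uniq n s : is_perm n s -> uniq s.
Proof. by move=> perm_s; rewrite (perm_uniq perm_s) iota_uniq. Qed.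

Lemma is_perm_mem n s : is_perm n s -> forall x, (x \in s) = (0 < x <= n).
Proof. by move=> perm_s x; rewrite (perm_mem perm_s) mem_iota add1n ltnS. Qed.

Lemma uniq_is_perm n s : uniq s -> (forall x, x \in s -> 0 < x <= n) ->
  size s = n -> is_perm n s.
Proof.
move=> uniq_s in_range size_s; apply: uniq_perm; rewrite ?iota_uniq //.
apply: (uniq_min_size uniq_s _ _).2; last by rewrite size_iota size_s.
by move=> x /in_range; rewrite mem_iota add1n ltnS.
Qed.

Lemma inT_avoids231 n s : inT n s = is_perm n s && avoids231 (stack_sort s).
Proof.
rewrite /inT; case perm_s: (is_perm n s) => //=.
have uniq_S := stack_sort_uniq (is_perm_uniq perm_s).
rewrite -sorted_stack_sort //; apply/eqP/idP => [-> | sorted_SS].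
  exact: iota_ltn_sorted.
apply: (irr_sorted_eq ltn_trans ltnn sorted_SS (iota_ltn_sorted 1 n)) => x.
rewrite !mem_stack_sort ?(is_perm_uniq perm_s) //.
by rewrite (is_perm_mem perm_s) mem_iota add1n ltnS.
Qed.

(* Left-to-right maxima of s that are at least b; along the recursion, b is
   the current maximum plus one. *)
Fixpoint lrmax_from (b : nat) (s : seq nat) : seq nat :=
  if s is x :: s' then
    if b <= x then x :: lrmax_from x.+1 s' else lrmax_from b s'
  else [::].

Lemma lrmax_valsE s : lrmax_vals s = lrmax_from 0 s.
Proof.
(* After a prefix p has been read, the bound is one more than max p. *)
suff gen p : [seq nth 0 (p ++ s) i | i <- iota (size p) (size s)
    & all (fun j => nth 0 (p ++ s) j < nth 0 (p ++ s) i) (iota 0 i)]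
    = lrmax_from (\max_(y <- p) y.+1) s.
  by have := gen [::]; rewrite big_nil.
elim: s p => [|x s IH] p //=.
have nth_x : nth 0 (p ++ x :: s) (size p) = x by rewrite nth_cat ltnn subnn.
have record_x : all (fun j => nth 0 (p ++ x :: s) j < x) (iota 0 (size p)) =
    (\max_(y <- p) y.+1 <= x).
  transitivity (all (ltn^~ x) p); last first.
    apply/idP/idP => [/allP lt_x | /bigmax_leqP_seq le_x].
      by apply/bigmax_leqP_seq => y /lt_x.
    by apply/allP => y /le_x; apply.
  rewrite -[in RHS](mkseq_nth 0 p) /mkseq all_map; apply: eq_in_all => j.
  by rewrite mem_iota add0n /= => lt_j; rewrite nth_cat lt_j.
have := IH (rcons p x).
rewrite size_rcons -cats1 -catA big_cat big_seq1 /= => IHx.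
rewrite nth_x record_x; case: leqP => [le_x | lt_x] /=.
  by rewrite nth_x IHx (maxn_idPr (leqW le_x)).
by rewrite IHx (maxn_idPl lt_x).
Qed.

Lemma lrmax_from_subseq b s : subseq (lrmax_from b s) s.
Proof.
elim: s b => //= x s IH b; case: leqP => _; first by rewrite eqxx.
exact: subseq_trans (IH b) (subseq_cons s x).
Qed.

Lemma lrmax_from_cat_below b s t : all (ltn^~ b) s ->
  lrmax_from b (s ++ t) = lrmax_from b t.
Proof. by elim: s => //= x s IH /andP [/= lt_x /IH]; rewrite leqNgt lt_x. Qed.

Lemma lrmax_from_cat_record b s x t : b <= x -> all (ltn^~ x) s ->
  lrmax_from b (s ++ x :: t) = lrmax_from b s ++ x :: lrmax_from x.+1 t.
Proof.
elim: s b => [|y s IH] b /= le_bx; first by rewrite le_bx.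
by case/andP=> /= lt_yx lt_sx; case: leqP => _; rewrite /= IH.
Qed.

Lemma lrmax_from_map f b b' s : {homo f : x y / x < y} ->
  (forall y, (b <= f y) = (b' <= y)) ->
  lrmax_from b (map f s) = map f (lrmax_from b' s).
Proof.
move=> f_incr; have f_mono := leqW_mono (leq_mono f_incr).
elim: s b b' => //= x s IH b b' le_b; rewrite le_b.
case: (b' <= x); last exact: IH.
by rewrite (IH _ x.+1) // => y; apply: f_mono.
Qed.

Lemma lrmax_from_split b s x : x \in lrmax_from b s ->
  exists s1 s2, [/\ s = s1 ++ x :: s2, b <= x & all (ltn^~ x) s1].
Proof.
elim: s b => //= y s IH b; case: leqP => [le_by | lt_yb].
  case/predU1P=> [-> | /IH [s1 [s2 [-> lt_yx lt_s1]]]]; first by exists [::], s.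
  exists (y :: s1), s2.
  by split; rewrite //= ?lt_yx ?(leq_trans le_by (ltnW lt_yx)).
case/IH=> s1 [s2 [-> le_bx lt_s1]]; exists (y :: s1), s2.
by split; rewrite //= (leq_trans lt_yb le_bx).
Qed.

Lemma lrmax_from_nth_split s j : uniq s -> j < size (lrmax_from 0 s) ->
  let a := nth 0 (lrmax_from 0 s) j in
  exists s1 s2, [/\ s = s1 ++ a :: s2, all (ltn^~ a) s1
    & size (lrmax_from a.+1 s2) = size (lrmax_from 0 s) - j.+1].
Proof.
move=> uniq_s lt_j a; have uniq_L := subseq_uniq (lrmax_from_subseq 0 s) uniq_s.
have [s1 [s2 [s_eq _ lt_s1]]] := lrmax_from_split (mem_nth 0 lt_j).
exists s1, s2; split=> //.
have L_eq := lrmax_from_cat_record s2 (leq0n a) lt_s1; rewrite -s_eq in L_eq.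
have a_notin : a \notin lrmax_from 0 s1.
  apply: contraTN isT => /(mem_subseq (lrmax_from_subseq 0 s1)).
  by move/(allP lt_s1); rewrite /= ltnn.
have := index_uniq 0 lt_j uniq_L; rewrite -/a [X in index _ X]L_eq.
rewrite index_cat (negbTE a_notin) /= eqxx addn0.
by rewrite L_eq size_cat /= => <-; lia.
Qed.

Definition shift1 (k1 m k2 x : nat) : nat := if x < m then x + k1 else x + k2.

Lemma shiftE k1 m k2 tau : shift k1 m k2 tau = map (shift1 k1 m k2) tau.
Proof. by []. Qed.

Lemma shift1_incr k1 m k2 : k1 <= k2 -> {homo shift1 k1 m k2 : x y / x < y}.
Proof. by rewrite /shift1 => le_k x y; case: ifP; case: ifP; lia. Qed.

Lemma leq_shift1 k1 m k2 x : x <= shift1 k1 m k2 x.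
Proof. by rewrite /shift1; case: ifP => _; apply: leq_addr. Qed.

Section C2.

Variables (k l a : nat) (pi1 pi2 u s1 s2 : seq nat).
Hypothesis k_gt0 : 0 < k.

Local Notation N := (k + l + 1).
Local Notation g1 := (shift1 0 k a).
Local Notation g2 := (shift1 (k - 1) (a + 1) k).
Local Notation pi := (shift 0 k a pi1 ++ [:: N] ++ shift (k - 1) (a + 1) k pi2).

Let g1_incr : {homo g1 : x y / x < y}.
Proof. exact: shift1_incr (leq0n a). Qed.

Let g2_incr : {homo g2 : x y / x < y}.
Proof. exact: shift1_incr (leq_subr 1 k). Qed.

Let g1_lt_N x : x <= k -> a <= l -> g1 x < N.
Proof. by rewrite /shift1; case: ifP; lia. Qed.

Let g2_lt_N y : y <= l -> g2 y < N.
Proof. by rewrite /shift1; case: ifP; lia. Qed.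

Let g2_ge_k y : 0 < y -> k <= g2 y.
Proof. by rewrite /shift1; case: ifP; lia. Qed.

Let g1_neq_g2 x y : x <= k -> 0 < y -> g1 x != g2 y.
Proof.
rewrite /shift1 => le_xk y_gt0.
by case: ifP; case: ifP => hy hx; apply/eqP; lia.
Qed.

Let lt_g2_ka y : (g2 y < k + a) = (y <= a).
Proof. by rewrite /shift1; case: ifP => cond; apply/idP/idP; lia. Qed.

Let gt_g2_ka y : (k + a < g2 y) = (a < y).
Proof. by rewrite /shift1; case: ifP => cond; apply/idP/idP; lia. Qed.

Hypotheses (pi1T : inT k pi1) (pi2T : inT l pi2).
Hypotheses (pi1_sort : stack_sort pi1 = rcons u k) (u_lt : all (ltn^~ k) u).
Hypotheses (pi2_sort : stack_sort pi2 = s1 ++ a :: s2).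
Hypotheses (s1_lt : all (ltn^~ a) s1).

Let pi1P : is_perm k pi1. Proof. by case/andP: pi1T. Qed.
Let pi2P : is_perm l pi2. Proof. by case/andP: pi2T. Qed.
Let uniq_pi1 : uniq pi1. Proof. exact: is_perm_uniq pi1P. Qed.
Let uniq_pi2 : uniq pi2. Proof. exact: is_perm_uniq pi2P. Qed.

Let avoid_pi1 : avoids231 (stack_sort pi1).
Proof. by move: pi1T; rewrite inT_avoids231 => /andP []. Qed.

Let avoid_pi2 : avoids231 (stack_sort pi2).
Proof. by move: pi2T; rewrite inT_avoids231 => /andP []. Qed.

Let S2_range y : y \in stack_sort pi2 -> 0 < y <= l.
Proof. by rewrite (mem_stack_sort uniq_pi2) (is_perm_mem pi2P). Qed.

Let a_le_l : a <= l.
Proof.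
have : a \in stack_sort pi2 by rewrite pi2_sort mem_cat mem_head orbT.
by case/S2_range/andP.
Qed.

Let lt_ka_N : k + a < N.
Proof. by rewrite addn1 ltnS leq_add2l. Qed.

Let left_range z : z \in map g1 pi1 -> 0 < z < N.
Proof.
case/mapP=> x; rewrite (is_perm_mem pi1P) => /andP [x_gt0 le_xk] ->.
by rewrite (leq_trans x_gt0 (leq_shift1 _ _ _ _)) g1_lt_N.
Qed.

Let right_range z : z \in map g2 pi2 -> 0 < z < N.
Proof.
case/mapP=> y; rewrite (is_perm_mem pi2P) => /andP [y_gt0 le_yl] ->.
by rewrite (leq_trans y_gt0 (leq_shift1 _ _ _ _)) g2_lt_N.
Qed.

Lemma perm_C2 : is_perm N pi.
Proof.
have N_notin (s : seq nat) : (forall z, z \in s -> 0 < z < N) -> N \notin s.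
  by move=> range_s; apply/negP=> /range_s; rewrite ltnn andbF.
apply: uniq_is_perm.
- rewrite !shiftE cat_uniq /= (negbTE (N_notin _ left_range)).
  rewrite (N_notin _ right_range).
  rewrite (map_inj_uniq (incn_inj (leq_mono g1_incr))) uniq_pi1.
  rewrite (map_inj_uniq (incn_inj (leq_mono g2_incr))) uniq_pi2 /= !andbT.
  apply/hasPn=> _ /mapP [y y_in ->]; apply/mapP=> -[x x_in].
  move: x_in y_in; rewrite (is_perm_mem pi1P) (is_perm_mem pi2P).
  by case/andP=> _ le_xk /andP [y_gt0 _]; apply/eqP; rewrite eq_sym g1_neq_g2.
- move=> z; rewrite !shiftE mem_cat in_cons.
  have le_N x : 0 < x < N -> 0 < x <= N by case/andP=> -> /ltnW.
  case/or3P=> [/left_range/le_N -> | /eqP -> | /right_range/le_N ->] //.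
  by rewrite addn1 leqnn.
- rewrite size_cat /= !size_map (perm_size pi1P) (perm_size pi2P) !size_iota.
  by rewrite addnS addn1.
Qed.

Lemma stack_sort_C2 :
  stack_sort pi = u ++ (k + a) :: map g2 (stack_sort pi2) ++ [:: N].
Proof.
have lt_N s : (forall z, z \in s -> 0 < z < N) -> all (ltn^~ N) s.
  by move=> range_s; apply/allP=> z /range_s /andP [].
rewrite !shiftE /= stack_sort_cat_max ?lt_N //.
rewrite (stack_sort_map g1_incr uniq_pi1) (stack_sort_map g2_incr uniq_pi2).
rewrite pi1_sort map_rcons {2}/shift1 ltnn cat_rcons; congr (_ ++ _).
rewrite -[RHS]map_id; apply/eq_in_map=> x /(allP u_lt) /= lt_xk.
by rewrite /shift1 lt_xk addn0.
Qed.

Lemma inT_C2 : inT N pi.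
Proof.
rewrite inT_avoids231 perm_C2 stack_sort_C2 /=.
have no231_ka : ~~ starts231 (k + a) (map g2 (stack_sort pi2)).
  have a_notin : a \notin s2.
    move: (stack_sort_uniq uniq_pi2).
    by rewrite pi2_sort cat_uniq /= => /and4P [].
  rewrite pi2_sort -cat_rcons map_cat starts231_cat_below; last first.
    apply/allP=> _ /mapP [y y_in ->] /=; apply: ltnW; rewrite lt_g2_ka.
    move: y_in; rewrite mem_rcons in_cons.
    by case/predU1P=> [-> | /(allP s1_lt) /ltnW].
  rewrite (@starts231_map _ _ a) => [|y _|y y_in].
  - apply: (@avoids231_cross (rcons s1 a)); last by rewrite mem_rcons mem_head.
    by rewrite cat_rcons -pi2_sort.
  - exact: gt_g2_ka.
  have ne_ya : y != a by apply: contraNneq _ a_notin => <-.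
  by rewrite lt_g2_ka ltn_neqAle ne_ya.
apply: avoids231_cat_lt.
- by move: avoid_pi1; rewrite pi1_sort -cats1 => /avoids231_cat /andP [].
- rewrite -cat_cons; apply: avoids231_cat_lt.
  + by rewrite /= no231_ka avoids231_map.
  + by [].
  + rewrite allrel1r /= lt_ka_N.
    by apply/allP=> _ /mapP [y /S2_range /andP [_ /g2_lt_N lt_N] ->].
apply/allrelP=> x z /(allP u_lt) /= lt_xk; rewrite in_cons mem_cat mem_seq1.
case/or3P=> [/eqP -> | /mapP [y /S2_range /andP [y_gt0 _] ->] | /eqP ->].
- exact: leq_trans lt_xk (leq_addr a k).
- exact: leq_trans lt_xk (g2_ge_k y_gt0).
exact: ltn_addr 1 (ltn_addr l lt_xk).
Qed.

Lemma slmax_C2 : slmax pi = slmax pi1 + size (lrmax_from a.+1 s2) + 1.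
Proof.
have u_lt_ka : all (ltn^~ (k + a)) u.
  by apply: sub_all u_lt => x /= /leq_trans; apply; apply: leq_addr.
have S2_lt_N : all (ltn^~ N) (map g2 (stack_sort pi2)).
  by apply/allP=> _ /mapP [y /S2_range /andP [_ /g2_lt_N lt_N] ->].
rewrite /slmax !lrmax_valsE stack_sort_C2 pi1_sort -cats1.
rewrite !lrmax_from_cat_record // (lrmax_from_map _ g2_incr gt_g2_ka).
rewrite pi2_sort -[s1 ++ _]cat_rcons lrmax_from_cat_below; last first.
  by rewrite all_rcons /= ltnSn; apply: sub_all s1_lt => y /= /ltnW.
by rewrite !size_cat /= size_cat size_map /= -!addnA add1n.
Qed.

End C2.

Theorem proposition6 (k l : nat) (pi1 pi2 : seq nat) (i : nat) :
  0 < k -> 0 < l -> inT k pi1 -> inT l pi2 ->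
  1 <= i <= slmax pi2 ->
  inT (k + l + 1) (C2 k l pi1 pi2 i) /\
  slmax (C2 k l pi1 pi2 i) = slmax pi1 + slmax pi2 - i + 1.
Proof.
move=> k_gt0 _ pi1T pi2T /andP [i_gt0 le_i].
have /andP [pi1P _] := pi1T; have /andP [pi2P _] := pi2T.
have [u pi1_sort u_lt] :
    exists2 u, stack_sort pi1 = rcons u k & all (ltn^~ k) u.
  apply: stack_sort_rcons_max; first exact: is_perm_uniq pi1P.
    by rewrite (is_perm_mem pi1P) k_gt0 leqnn.
  by apply/allP=> x; rewrite (is_perm_mem pi1P) => /andP [].
move: le_i; rewrite /slmax lrmax_valsE => le_i.
have [|s1 [s2 [pi2_sort s1_lt size_s2]]] :=
  lrmax_from_nth_split (stack_sort_uniq (is_perm_uniq pi2P)) (j := i.-1).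
  by rewrite prednK.
rewrite /C2 lrmax_valsE; split.
  exact: inT_C2 pi1_sort u_lt pi2_sort s1_lt.
apply: eq_trans (slmax_C2 k_gt0 pi1T pi2T pi1_sort u_lt pi2_sort s1_lt) _.
by rewrite size_s2 prednK // /slmax !lrmax_valsE addnBA.
Qed.
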